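(* Let $T_M$ be an Endo–Pajitnov manifold as in the context and assume $M$ is diagonalizable; choose the basis $\{b_j\}$ of $W$ to consist of eigenvectors, so that $R$ is diagonal with entries $\beta_1,\dots,\beta_n$. Then there exist smooth complex $1$-forms $\eta,\theta_1,\dots,\theta_n$ of type $(1,0)$ on $\mathbb H\times\mathbb C^n$, invariant under every element of $G_M$ (hence descending to $T_M$), forming at every point a basis of the $(1,0)$-cotangent space, and satisfying $$d\eta=\log\alpha\ \eta\wedge\overline\eta,\qquad d\theta_k=-\log\beta_k\,(\eta+\overline\eta)\wedge\theta_k,\quad 1\le k\le n,$$ where $\log$ denotes the principal branch.
   Context: Endo–Pajitnov setup. Let $n\ge 2$ be an integer and let $M\in \mathrm{SL}(2n+1,\mathbb Z)$ be a matrix whose eigenvalues, listed with multiplicity, are $\alpha,\beta_1,\dots,\beta_n,\overline{\beta_1},\dots,\overline{\beta_n}$, where $\alpha$ is real, $\alpha>0$, $\alpha\neq 1$, and $\operatorname{Im}\beta_j>0$ for all $j$. Let $a=(a^1,\dots,a^{2n+1})^T\in\mathbb R^{2n+1}$ be a nonzero eigenvector of $M$ for $\alpha$. Let $W\subset\mathbb C^{2n+1}$ be the direct sum of the generalized eigenspaces $\{x:\exists N,\ (M-\beta_jI)^Nx=0\}$ over the $\beta_j$ (so $\dim_{\mathbb C}W=n$), and let $b_1,\dots,b_n$ be a $\mathbb C$-basis of $W$, $b_j=(b_j^1,\dots,b_j^{2n+1})^T$. For $1\le i\le 2n+1$ set $u_i=(a^i,b_1^i,\dots,b_n^i)\in\mathbb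 R\times\mathbb C^n$. Let $R=(r_{ij})\in M_n(\mathbb C)$ be the matrix of $M|_W:W\to W$ in the basis $\{b_j\}$, i.e. $Mb_j=\sum_i r_{ij}b_i$. Let $\mathbb H=\{w\in\mathbb C:\operatorname{Im}w>0\}$ and define automorphisms of $\mathbb H\times\mathbb C^n$ by $g_0(w,z)=(\alpha w,R^Tz)$ and $g_i(w,z)=(w,z)+u_i$, $1\le i\le 2n+1$. Let $G_M$ be the group generated by $g_0,\dots,g_{2n+1}$; it acts freely and properly discontinuously, and $T_M:=G_M\backslash(\mathbb H\times\mathbb C^n)$ is a compact complex manifold of complex dimension $n+1$ (the Endo–Pajitnov manifold of $M$). Its biholomorphism class does not depend on the choice of $a$ and of the basis $\{b_j\}$. *)

From mathcomp Require Import all_boot all_algebra.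
From mathcomp Require Import complex.
From mathcomp Require Import all_classical all_reals all_analysis.
Set Implicit Arguments. Unset Strict Implicit. Unset Printing Implicit Defensive.
Import GRing.Theory Num.Theory.
Local Open Scope ring_scope.
Local Open Scope complex_scope.

Section EPDefs.
Variable R : realType.
Local Notation C := R[i].

(* Points of C^{n+1} = C x C^n are row vectors p; coordinate 0 is w,
   coordinate (lift ord0 k) is z_k. *)
Definition EPpt (n : nat) := 'rV[C]_(n.+1).

Definition EPdom (n : nat) (p : EPpt n) : Prop := 0 < complex.Im (p ord0 ord0).

(* Principal branch of the complex logarithm: ln|z| + i Arg z, Arg z in (-pi, pi]. *)
Definition cabs (z : C) : R := Num.sqrt (complex.Re z ^+ 2 + complex.Im z ^+ 2).
Definition Arg (z : C) : R :=
  if 0 <= complex.Im z then acos (complex.Re z / cabs z) else - acos (complex.Re z / cabs z).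
Definition Log (z : C) : C := (ln (cabs z)) +i* (Arg z).

Definition has_dirderiv n (F : EPpt n -> C) (p v : EPpt n) (l : C) : Prop :=
  is_derive (0 : R) (1 : R) (fun t : R => complex.Re (F (p + t%:C *: v))) (complex.Re l) /\
  is_derive (0 : R) (1 : R) (fun t : R => complex.Im (F (p + t%:C *: v))) (complex.Im l).

Definition dirderiv n (F : EPpt n -> C) (p v : EPpt n) : C :=
  (derive1 (fun t : R => complex.Re (F (p + t%:C *: v))) 0) +i*
  (derive1 (fun t : R => complex.Im (F (p + t%:C *: v))) 0).

Definition ccont_on n (U : EPpt n -> Prop) (F : EPpt n -> C) : Prop :=
  forall p, U p -> forall e : R, 0 < e -> exists d : R, 0 < d /\
    forall q : EPpt n, (forall j, `|q ord0 j - p ord0 j| < d%:C) ->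
      `|F q - F p| < e%:C.

Fixpoint Ck_on n (U : EPpt n -> Prop) (k : nat) (F : EPpt n -> C) : Prop :=
  match k with
  | 0 => ccont_on U F
  | k'.+1 => ccont_on U F /\
      forall v : EPpt n, exists G : EPpt n -> C,
        (forall p, U p -> has_dirderiv F p v (G p)) /\ Ck_on U k' G
  end.

Definition smooth_on n (U : EPpt n -> Prop) (F : EPpt n -> C) : Prop :=
  forall k, Ck_on U k F.

(* Complex 1-forms on (an open subset of) C^{n+1}: omega p v, with p a point
   and v a (real) tangent vector. *)
Definition form1 n := EPpt n -> EPpt n -> C.
Definition form2 n := EPpt n -> EPpt n -> EPpt n -> C.

Definition smooth_10_form n (U : EPpt n -> Prop) (om : form1 n) : Prop :=
  (forall p, U p -> forall (c : C) (v w : EPpt n),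
       om p (c *: v + w) = c * om p v + om p w) /\
  (forall v, smooth_on U (fun p => om p v)).

Definition conjform n (om : form1 n) : form1 n := fun p v => (om p v)^*.
Definition addform n (om1 om2 : form1 n) : form1 n := fun p v => om1 p v + om2 p v.
Definition wedge1 n (a b : form1 n) : form2 n :=
  fun p X Y => a p X * b p Y - a p Y * b p X.
(* Exterior derivative (via constant vector fields X, Y). *)
Definition dform n (om : form1 n) : form2 n :=
  fun p X Y => dirderiv (fun q => om q Y) p X - dirderiv (fun q => om q X) p Y.

Definition Dmap n (g : EPpt n -> EPpt n) (p v : EPpt n) : EPpt n :=
  \row_j dirderiv (fun q => g q ord0 j) p v.
Definition invariant_form n (U : EPpt n -> Prop) (g : EPpt n -> EPpt n)
  (om : form1 n) : Prop :=
  forall p, U p -> forall v, om (g p) (Dmap g p v) = om p v.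

(* The family (eta, theta_1, ..., theta_n) is a C-basis of the space of
   C-linear functionals on the tangent space at p (the (1,0)-cotangent space). *)
Definition famf n (eta : form1 n) (theta : 'I_n -> form1 n) (i : 'I_n.+1) : form1 n :=
  match unlift ord0 i with None => eta | Some k => theta k end.
Definition basis10_at n (om : 'I_n.+1 -> form1 n) (p : EPpt n) : Prop :=
  (forall c : 'I_n.+1 -> C,
     (forall v, \sum_i c i * om i p v = 0) -> forall i, c i = 0) /\
  (forall f : EPpt n -> C,
     (forall (c : C) (v w : EPpt n), f (c *: v + w) = c * f v + f w) ->
     exists c : 'I_n.+1 -> C, forall v, f v = \sum_i c i * om i p v).

Inductive gen_group (T I : Type) (gens : I -> T -> T) : (T -> T) -> Prop :=
  | gg_gen i : gen_group gens (gens i)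
  | gg_comp g h : gen_group gens g -> gen_group gens h -> gen_group gens (g \o h)
  | gg_inv g h : gen_group gens g -> cancel g h -> cancel h g -> gen_group gens h.

Definition intC (z : int) : C := z%:~R.

Definition inW m n (Mc : 'M[C]_m) (beta : 'I_n -> C) (x : 'cV[C]_m) : Prop :=
  exists xs : 'I_n -> 'cV[C]_m, x = \sum_j xs j /\
    forall j, exists N : nat, (Mc - (beta j)%:M) ^+ N *m xs j = 0.

Definition basis_of_W m n (Mc : 'M[C]_m) (beta : 'I_n -> C) (b : 'I_n -> 'cV[C]_m) : Prop :=
  (forall j, inW Mc beta (b j)) /\
  (forall c : 'I_n -> C, \sum_j c j *: b j = 0 -> forall j, c j = 0) /\
  (forall x, inW Mc beta x -> exists c : 'I_n -> C, x = \sum_j c j *: b j).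

Definition uvec m n (a : 'cV[R]_m) (b : 'I_n -> 'cV[C]_m) (i : 'I_m) : EPpt n :=
  \row_j match unlift ord0 j with
         | None => (a i ord0)%:C
         | Some k => b k i ord0
         end.

Definition EPg0 n (alpha : R) (Rm : 'M[C]_n) (p : EPpt n) : EPpt n :=
  \row_j match unlift ord0 j with
         | None => alpha%:C * p ord0 ord0
         | Some k => \sum_l Rm l k * p ord0 (lift ord0 l)
         end.

Definition EPgens m n (alpha : R) (Rm : 'M[C]_n) (a : 'cV[R]_m)
  (b : 'I_n -> 'cV[C]_m) (i : 'I_m.+1) : EPpt n -> EPpt n :=
  match unlift ord0 i with
  | None => EPg0 alpha Rm
  | Some i' => fun p => p + uvec a b i'
  end.

End EPDefs.

(* With y = Im w and L = log alpha, take
     eta = -i/(2L) dw/y  and  theta_k = y^{s_k} dz_k,  s_k = -Log(beta_k)/L.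
   Then eta + conj eta = dy/(L y), and the structure equations follow from
   d(1/y) = -dy/y^2 and d(y^s) = s y^s dy/y.  Every element of G_M is a
   diagonal affine map (w, z) |-> (A w + t, B_k z_k + c_k) with A > 0 and
   B_k A^{s_k} = 1: the generators are such maps because beta_k = exp(Log beta_k),
   and the condition is stable under composition and inversion.  Such maps
   multiply dw/y by 1 and dz_k by B_k = A^{-s_k}, so they preserve all the forms. *)
From mathcomp Require Import all_boot all_algebra.
From mathcomp Require Import complex.
From mathcomp Require Import all_classical all_reals all_analysis.
From mathcomp Require Import ring lra all_order.
Import Order.TTheory GRing.Theory Num.Theory.
Local Open Scope ring_scope.
Local Open Scope complex_scope.
Set Implicit Arguments. Unset Strict Implicit. Unset Printing Implicit Defensive.

Lemma linear_row_sum (K : pzRingType) m (f : 'rV[K]_m -> K) :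
  (forall c v w, f (c *: v + w) = c * f v + f w) ->
  forall v, f v = \sum_i v ord0 i * f (delta_mx ord0 i).
Proof.
move=> f_lin v.
have f0 : f 0 = 0.
  have := f_lin 1 0 0; rewrite scaler0 addr0 mul1r => f00.
  by apply: (@addrI _ (f 0)); rewrite addr0 -f00.
rewrite {1}(row_sum_delta v); elim/big_rec2: _ => //= i y1 y2 _ f_y1.
by rewrite f_lin f_y1.
Qed.

Lemma eigen_coord_diag (K : pzRingType) (V : lmodType K) m (b : 'I_m -> V)
    (beta : 'I_m -> K) (A : 'M[K]_m) :
  (forall c : 'I_m -> K, \sum_j c j *: b j = 0 -> forall j, c j = 0) ->
  (forall j, \sum_i A i j *: b i = beta j *: b j) ->
  forall i j, A i j = if i == j then beta j else 0.
Proof.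
move=> b_free A_eig i j; apply/eqP; rewrite -subr_eq0; apply/eqP.
apply: (b_free (fun i => A i j - (if i == j then beta j else 0))).
under eq_bigr do rewrite scalerBl.
rewrite sumrB A_eig (bigD1 j) //= eqxx big1 ?addr0 ?subrr // => i' /negbTE ->.
by rewrite scale0r.
Qed.

Section ComplexParts.
Variable R : realType.
Local Notation C := R[i].
Implicit Types x y : C.

Lemma cReM x y : complex.Re (x * y) = complex.Re x * complex.Re y - complex.Im x * complex.Im y.
Proof. by case: x => a b; case: y. Qed.
Lemma cImM x y : complex.Im (x * y) = complex.Re x * complex.Im y + complex.Im x * complex.Re y.
Proof. by case: x => a b; case: y. Qed.
Lemma cReD x y : complex.Re (x + y) = complex.Re x + complex.Re y.
Proof. by case: x => a b; case: y. Qed.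
Lemma cImD x y : complex.Im (x + y) = complex.Im x + complex.Im y.
Proof. by case: x => a b; case: y. Qed.
Lemma cReN x : complex.Re (- x) = - complex.Re x. Proof. by case: x. Qed.
Lemma cImN x : complex.Im (- x) = - complex.Im x. Proof. by case: x. Qed.
Lemma cReJ x : complex.Re x^* = complex.Re x. Proof. by case: x. Qed.
Lemma cImJ x : complex.Im x^* = - complex.Im x. Proof. by case: x. Qed.

Lemma complexP x y : complex.Re x = complex.Re y -> complex.Im x = complex.Im y -> x = y.
Proof. by case: x => a b; case: y => c d /= -> ->. Qed.

Lemma realC_neq0 (r : R) : r != 0 -> r%:C != 0 :> C.
Proof. by move=> r0; rewrite eq_complex /= negb_and r0. Qed.

Lemma Re_le_normc x : `|complex.Re x| <= Num.sqrt (complex.Re x ^+ 2 + complex.Im x ^+ 2).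
Proof. by rewrite -sqrtr_sqr; apply: ler_wsqrtr; rewrite lerDl sqr_ge0. Qed.

Lemma Im_le_normc x : `|complex.Im x| <= Num.sqrt (complex.Re x ^+ 2 + complex.Im x ^+ 2).
Proof. by rewrite -sqrtr_sqr; apply: ler_wsqrtr; rewrite lerDr sqr_ge0. Qed.

Lemma normc_le_parts x : Num.sqrt (complex.Re x ^+ 2 + complex.Im x ^+ 2)
  <= `|complex.Re x| + `|complex.Im x|.
Proof.
rewrite -[X in _ <= X]ger0_norm ?addr_ge0 // -sqrtr_sqr; apply: ler_wsqrtr.
by rewrite sqrrD !real_normK ?num_real // -addrA lerD2l lerDr mulrn_wge0 ?mulr_ge0.
Qed.

Lemma normc_lt_parts x (e : R) :
  `|complex.Re x| < e / 2 -> `|complex.Im x| < e / 2 -> `|x| < e%:C.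
Proof.
move=> hRe hIm; rewrite normc_def ltcR.
by apply: le_lt_trans (normc_le_parts x) _; rewrite [e]splitr ltrD.
Qed.

Lemma Im_lt_normc x (d : R) : `|x| < d%:C -> `|complex.Im x| < d.
Proof. by rewrite normc_def ltcR; apply: le_lt_trans; exact: Im_le_normc. Qed.

End ComplexParts.

Section ComplexExp.
Variable R : realType.
Local Notation C := R[i].

Definition cexp (z : C) : C :=
  (expR (complex.Re z) * cos (complex.Im z)) +i* (expR (complex.Re z) * sin (complex.Im z)).

Definition rpowc (y : R) (s : C) : C := cexp (s * (ln y)%:C).

Lemma cexpD z w : cexp (z + w) = cexp z * cexp w.
Proof.
case: z => a b; case: w => c d; apply: complexP.
  by rewrite /cexp cReM /= expRD cosD; ring.
by rewrite /cexp cImM /= expRD sinD; ring.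
Qed.

Lemma cexp0 : cexp 0 = 1.
Proof. by apply: complexP; rewrite /= expR0 mul1r ?cos0 ?sin0. Qed.

Lemma cexp_neq0 z : cexp z != 0.
Proof.
apply/eqP => ez0; have := cexpD z (- z).
by rewrite subrr cexp0 ez0 mul0r => /eqP; rewrite oner_eq0.
Qed.

Lemma cexpN z : cexp (- z) = (cexp z)^-1.
Proof. by apply: (mulIf (cexp_neq0 z)); rewrite -cexpD addNr cexp0 mulVf ?cexp_neq0. Qed.

Lemma cexpR (r : R) : cexp r%:C = (expR r)%:C.
Proof. by apply: complexP; rewrite /= ?cos0 ?sin0 ?mulr1 ?mulr0. Qed.

Lemma cexp_Log (z : C) : 0 < complex.Im z -> cexp (Log z) = z.
Proof.
move=> Imz_gt0; set a := complex.Re z; set b := complex.Im z.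
have cabs_gt0 : 0 < cabs z.
  by rewrite /cabs sqrtr_gt0 ltr_wpDl ?sqr_ge0 ?exprn_gt0.
have cabs2 : cabs z ^+ 2 = a ^+ 2 + b ^+ 2 by rewrite sqr_sqrtr ?addr_ge0 ?sqr_ge0.
set x := a / cabs z.
have x_le1 : `|x| <= 1.
  by rewrite normrM normfV (gtr0_norm cabs_gt0) ler_pdivrMr // mul1r Re_le_normc.
have sin_arg : 1 - x ^+ 2 = (b / cabs z) ^+ 2.
  apply: (mulIf (expf_neq0 2 (lt0r_neq0 cabs_gt0))).
  by rewrite !expr_div_n mulrBl !divfK ?expf_neq0 ?lt0r_neq0 // mul1r cabs2; ring.
have Arg_acos : Arg z = acos x by rewrite /Arg ltW.
rewrite /Log /cexp /= Arg_acos lnK ?posrE // acosK ?in_itv /= -?ler_norml //.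
rewrite sin_acos -?ler_norml // sin_arg sqrtr_sqr gtr0_norm ?divr_gt0 //.
by apply: complexP; rewrite /= mulrC divfK ?lt0r_neq0.
Qed.

Lemma rpowcM (x y : R) s : 0 < x -> 0 < y -> rpowc (x * y) s = rpowc x s * rpowc y s.
Proof. by move=> x0 y0; rewrite /rpowc lnM ?posrE // rmorphD mulrDr cexpD. Qed.

Lemma rpowc1 s : rpowc 1 s = 1.
Proof. by rewrite /rpowc ln1 mulr0 cexp0. Qed.

Lemma rpowc_neq0 y s : rpowc y s != 0.
Proof. exact: cexp_neq0. Qed.

Lemma rpowcB1 (y : R) s : 0 < y -> rpowc y (s - 1) = rpowc y s * (y^-1)%:C.
Proof. by move=> y0; rewrite /rpowc mulrBl mul1r cexpD -rmorphN cexpR expRN lnK. Qed.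

Lemma rpowcN1 (y : R) : 0 < y -> rpowc y (-1) = (y^-1)%:C.
Proof. by move=> y0; rewrite -sub0r rpowcB1 // /rpowc mul0r cexp0 mul1r. Qed.

End ComplexExp.

Section ComplexDerive.
Variable R : realType.
Local Notation C := R[i].

Definition is_cderive (f : R -> C) (x : R) (l : C) :=
  is_derive x (1 : R) (fun t => complex.Re (f t)) (complex.Re l) /\
  is_derive x (1 : R) (fun t => complex.Im (f t)) (complex.Im l).

Lemma is_cderiveMl (f : R -> C) x l K :
  is_cderive f x l -> is_cderive (fun t => K * f t) x (K * l).
Proof.
case=> dRe dIm; split.
- have -> : (fun t => complex.Re (K * f t)) =
      (complex.Re K *: (fun t => complex.Re (f t)) - complex.Im K *: (fun t => complex.Im (f t)))%R.
    by apply: funext => t; rewrite cReM.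
  by rewrite cReM; apply: is_deriveB; apply: is_deriveZ.
- have -> : (fun t => complex.Im (K * f t)) =
      (complex.Re K *: (fun t => complex.Im (f t)) + complex.Im K *: (fun t => complex.Re (f t)))%R.
    by apply: funext => t; rewrite cImM.
  by rewrite cImM; apply: is_deriveD; apply: is_deriveZ.
Qed.

Lemma is_cderive_cexp (g : R -> C) x l :
  is_cderive g x l -> is_cderive (fun t => cexp (g t)) x (cexp (g x) * l).
Proof.
case=> dRe dIm.
have dE := is_derive1_comp (is_derive_expR _) dRe.
have dcos := is_derive1_comp (is_derive_cos _) dIm.
have dsin := is_derive1_comp (is_derive_sin _) dIm.
split.
  apply: is_derive_eq (is_deriveM dE dcos) _.
  by rewrite cReM /= -[_ *: _]/(_ * _) -[_ *: _]/(_ * _); ring.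
apply: is_derive_eq (is_deriveM dE dsin) _.
by rewrite cImM /= -[_ *: _]/(_ * _) -[_ *: _]/(_ * _); ring.
Qed.

Lemma is_cderive_real (f : R -> R) x df :
  is_derive x (1 : R) f df -> is_cderive (fun t => (f t)%:C) x df%:C.
Proof. by move=> df_ok; split => //=; exact: is_derive_cst. Qed.

Lemma is_derive_affine (y0 u x : R) : is_derive x (1 : R) (fun t => y0 + t * u) u.
Proof.
have -> : (fun t => y0 + t * u) = (cst y0 + u *: id)%R by apply: funext => t; rewrite /= mulrC.
by apply: is_derive_eq (is_deriveD (is_derive_cst y0 x 1) (is_deriveZ u (is_derive_id x 1))) _;
  by rewrite add0r -[_ *: _]/(_ * _) mulr1.
Qed.

Lemma is_cderive_rpowc_affine (s : C) (y0 u x : R) : 0 < y0 + x * u ->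
  is_cderive (fun t => rpowc (y0 + t * u) s) x
             (rpowc (y0 + x * u) s * (s * ((y0 + x * u)^-1 * u)%:C)).
Proof.
move=> y_gt0; apply: (is_cderive_cexp (g := fun t => s * (ln (y0 + t * u))%:C)).
apply/is_cderiveMl/is_cderive_real.
exact: (@is_derive1_comp _ _ (fun t => y0 + t * u) _ _ _
  (is_derive1_ln y_gt0) (is_derive_affine y0 u x)).
Qed.

Lemma is_derive_cont_eps (f : R -> R) y0 df : is_derive y0 (1 : R) f df ->
  forall e : R, 0 < e -> exists2 d : R, 0 < d & forall y, `|y0 - y| < d -> `|f y0 - f y| < e.
Proof.
move=> df_ok e e_gt0.
have /derivable1_diffP/differentiable_continuous f_cont : derivable f y0 1
  := @ex_derive _ _ _ _ _ _ _ df_ok.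
have [d d_gt0 near_y0] := (nbhs_normP _ _).1 ((cvgrPdist_lt _ _).1 f_cont e e_gt0).
by exists d.
Qed.

End ComplexDerive.

Section HalfPlaneFunctions.
Variable R : realType.
Local Notation C := R[i].
Variable n : nat.
Local Notation P := (EPpt R n).

Definition Impow (K s : C) : P -> C := fun p => K * rpowc (complex.Im (p ord0 ord0)) s.

Lemma has_dirderivP (F : P -> C) p v l :
  is_cderive (fun t : R => F (p + t%:C *: v)) 0 l -> has_dirderiv F p v l.
Proof. by []. Qed.

Lemma has_dirderiv_Impow K s (p v : P) : EPdom p ->
  has_dirderiv (Impow K s) p v
    (K * s * (complex.Im (v ord0 ord0))%:C * rpowc (complex.Im (p ord0 ord0)) (s - 1)).
Proof.
rewrite /EPdom => y_gt0; apply: has_dirderivP.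
set y := complex.Im (p ord0 ord0); set u := complex.Im (v ord0 ord0).
have -> : (fun t : R => Impow K s (p + t%:C *: v)) = (fun t => K * rpowc (y + t * u) s).
  by apply: funext => t; rewrite /Impow !mxE cImD cImM /= mul0r addr0.
have y_gt0' : 0 < y + 0 * u by rewrite mul0r addr0.
have := is_cderiveMl K (is_cderive_rpowc_affine s y_gt0').
rewrite mul0r addr0 rpowcB1 // [_ * u]mulrC rmorphM /=.
by congr is_cderive; ring.
Qed.

Lemma dirderivE (F : P -> C) p v l : has_dirderiv F p v l -> dirderiv F p v = l.
Proof.
case=> dRe dIm; rewrite /dirderiv !derive1E.
rewrite (@derive_val _ _ _ _ _ _ _ dRe) (@derive_val _ _ _ _ _ _ _ dIm).
by case: l {dRe dIm}.
Qed.

Lemma dirderiv_affine (F : P -> C) p v c0 c1 :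
  (forall t : R, F (p + t%:C *: v) = c0 + t%:C * c1) -> dirderiv F p v = c1.
Proof.
move=> F_affine; apply/dirderivE/has_dirderivP.
have -> : (fun t : R => F (p + t%:C *: v)) = (fun t : R => c0 + t%:C * c1) by apply: funext.
split.
  have -> : (fun t : R => complex.Re (c0 + t%:C * c1)) =
             (fun t => complex.Re c0 + t * complex.Re c1).
    by apply: funext => t; rewrite cReD cReM /= mul0r subr0.
  exact: is_derive_affine.
have -> : (fun t : R => complex.Im (c0 + t%:C * c1)) =
           (fun t => complex.Im c0 + t * complex.Im c1).
  by apply: funext => t; rewrite cImD cImM /= mul0r addr0.
exact: is_derive_affine.
Qed.

Lemma ccont_on_Impow K s : ccont_on (@EPdom R n) (Impow K s).
Proof.
move=> p y_gt0 e e_gt0; set y := complex.Im (p ord0 ord0).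
have y_gt0' : 0 < 0 + y * 1 by rewrite add0r mulr1.
have [dRe dIm] := is_cderiveMl K (is_cderive_rpowc_affine s y_gt0').
have e2_gt0 : 0 < e / 2 by rewrite divr_gt0.
have [d1 d1_gt0 nearRe] := is_derive_cont_eps dRe e2_gt0.
have [d2 d2_gt0 nearIm] := is_derive_cont_eps dIm e2_gt0.
exists (Num.min d1 d2); split => [|q near_q]; first by rewrite lt_min d1_gt0.
have := Im_lt_normc (near_q ord0).
rewrite cImD cImN lt_min distrC => /andP[/nearRe hRe /nearIm hIm].
rewrite !add0r !mulr1 in hRe hIm.
by apply: normc_lt_parts; rewrite ?cReD ?cImD ?cReN ?cImN distrC.
Qed.

Lemma smooth_on_Impow K s : smooth_on (@EPdom R n) (Impow K s).
Proof.
move=> k; elim: k K s => [|k IHk] K s /=; first exact: ccont_on_Impow.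
split=> [|v]; first exact: ccont_on_Impow.
exists (Impow (K * s * (complex.Im (v ord0 ord0))%:C) (s - 1)); split; last exact: IHk.
by move=> p; exact: has_dirderiv_Impow.
Qed.

End HalfPlaneFunctions.

Section EPForms.
Variable R : realType.
Local Notation C := R[i].
Variable n : nat.
Local Notation P := (EPpt R n).
Variable L : R.
Hypothesis L_neq0 : L != 0.
Variable beta : 'I_n -> C.

(* [-i/(2L)]: the constant that makes [eta + conj eta = dy / (L y)]. *)
Definition eta_coef : C := 0 +i* (- (2 * L)^-1).

Definition EPeta : form1 R n := fun p v => Impow (eta_coef * v ord0 ord0) (-1) p.

Definition EPexponent (k : 'I_n) : C := - Log (beta k) / L%:C.

Definition EPtheta (k : 'I_n) : form1 R n :=
  fun p v => Impow (v ord0 (lift ord0 k)) (EPexponent k) p.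

Lemma EPetaE (p v : P) : EPdom p ->
  EPeta p v = eta_coef * v ord0 ord0 * (complex.Im (p ord0 ord0))^-1%:C.
Proof. by move=> y_gt0; rewrite /EPeta /Impow rpowcN1. Qed.

Lemma smooth_10_form_EPeta : smooth_10_form (@EPdom R n) EPeta.
Proof. by split=> [p _ c v w|v]; [rewrite /EPeta /Impow !mxE; ring | exact: smooth_on_Impow]. Qed.

Lemma smooth_10_form_EPtheta k : smooth_10_form (@EPdom R n) (EPtheta k).
Proof. by split=> [p _ c v w|v]; [rewrite /EPtheta /Impow !mxE; ring | exact: smooth_on_Impow]. Qed.

Lemma EPeta_addJ (p X : P) : EPdom p ->
  EPeta p X + (EPeta p X)^* = (complex.Im (X ord0 ord0) / (L * complex.Im (p ord0 ord0)))%:C.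
Proof.
move=> y_gt0; rewrite (EPetaE X y_gt0).
have := lt0r_neq0 y_gt0; move: (complex.Im (p ord0 ord0)) => y y_neq0.
case: (X ord0 ord0) => x1 x2; apply: complexP.
  by rewrite !(cReM, cImM, cReD, cReJ, cImJ) /=; field; rewrite y_neq0 L_neq0.
by rewrite !(cImM, cReM, cImD, cReJ, cImJ) /= subrr.
Qed.

Lemma dform_EPeta (p X Y : P) : EPdom p ->
  dform EPeta p X Y = L%:C * wedge1 EPeta (conjform EPeta) p X Y.
Proof.
move=> y_gt0; rewrite /dform.
rewrite (dirderivE (has_dirderiv_Impow _ _ X y_gt0)).
rewrite (dirderivE (has_dirderiv_Impow _ _ Y y_gt0)).
rewrite /wedge1 /conjform !EPetaE // rpowcB1 // rpowcN1 //.
have := lt0r_neq0 y_gt0; move: (complex.Im (p ord0 ord0)) => y y_neq0.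
case: (X ord0 ord0) => x1 x2; case: (Y ord0 ord0) => y1 y2.
by apply: complexP; rewrite !(cReM, cImM, cReD, cImD, cReN, cImN, cReJ, cImJ) /=;
  field; rewrite L_neq0 y_neq0.
Qed.

Lemma dform_EPtheta k (p X Y : P) : EPdom p ->
  dform (EPtheta k) p X Y
    = - Log (beta k) * wedge1 (addform EPeta (conjform EPeta)) (EPtheta k) p X Y.
Proof.
move=> y_gt0; rewrite /dform.
rewrite (dirderivE (has_dirderiv_Impow _ _ X y_gt0)).
rewrite (dirderivE (has_dirderiv_Impow _ _ Y y_gt0)).
rewrite /wedge1 /addform /conjform /= (EPeta_addJ X y_gt0) (EPeta_addJ Y y_gt0).
rewrite /EPtheta /Impow (rpowcB1 _ y_gt0).
move: (rpowc _ _) => ys; have := lt0r_neq0 y_gt0; move: (complex.Im (p ord0 ord0)) => y y_neq0.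
rewrite /EPexponent !rmorphM /= !rmorphV ?unitfE ?mulf_neq0 //=.
by field; rewrite ?mulf_neq0 ?realC_neq0.
Qed.

Definition EPcoef (i : 'I_n.+1) (p : P) : C :=
  match unlift ord0 i with
  | None => eta_coef * rpowc (complex.Im (p ord0 ord0)) (-1)
  | Some k => rpowc (complex.Im (p ord0 ord0)) (EPexponent k)
  end.

Lemma famf_EPE i (p v : P) : famf EPeta EPtheta i p v = v ord0 i * EPcoef i p.
Proof.
by rewrite /famf /EPcoef; case: (unliftP ord0 i) => [k ->|->]; rewrite /EPtheta /EPeta /Impow; ring.
Qed.

Lemma EPcoef_neq0 i p : EPcoef i p != 0.
Proof.
rewrite /EPcoef; case: (unlift ord0 i) => [k|]; first exact: rpowc_neq0.
rewrite mulf_neq0 ?rpowc_neq0 // eq_complex /= negb_and oppr_eq0 invr_eq0.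
by rewrite mulf_neq0 ?pnatr_eq0 ?orbT.
Qed.

Lemma basis10_at_EP (p : P) : basis10_at (famf EPeta EPtheta) p.
Proof.
split=> [c c_rel i|f f_lin].
  have := c_rel (delta_mx ord0 i); under eq_bigr do rewrite famf_EPE.
  rewrite (bigD1 i) //= big1 ?addr0 => [|j /negbTE ji]; last by rewrite mxE ji mul0r mulr0.
  by rewrite mxE !eqxx mul1r => /eqP; rewrite mulf_eq0 (negbTE (EPcoef_neq0 _ _)) orbF => /eqP.
exists (fun i => f (delta_mx ord0 i) / EPcoef i p) => v.
rewrite (linear_row_sum f_lin v); apply: eq_bigr => i _.
by rewrite famf_EPE; field; exact: EPcoef_neq0.
Qed.

End EPForms.

Section EPAffine.
Variable R : realType.
Local Notation C := R[i].
Variable n : nat.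
Local Notation P := (EPpt R n).
Variable L : R.
Variable beta : 'I_n -> C.

Definition diag_coef (a : C) (b : 'I_n -> C) (j : 'I_n.+1) : C :=
  match unlift ord0 j with None => a | Some k => b k end.

Definition diag_affine (A : R) (B : 'I_n -> C) (t : R) (c : 'I_n -> C) : P -> P :=
  fun p => \row_j (diag_coef A%:C B j * p ord0 j + diag_coef t%:C c j).

Definition EPcompatible (A : R) (B : 'I_n -> C) :=
  0 < A /\ forall k, B k * rpowc A (EPexponent L beta k) = 1.

Definition EPaffine (g : P -> P) :=
  exists A B t c, EPcompatible A B /\ g =1 diag_affine A B t c.

Lemma Dmap_diag_affine A B t c (p v : P) :
  Dmap (diag_affine A B t c) p v = \row_j (diag_coef A%:C B j * v ord0 j).
Proof.
apply/rowP => j; rewrite !mxE.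
by apply: (dirderiv_affine (c0 := diag_affine A B t c p ord0 j)) => s; rewrite !mxE; ring.
Qed.

Lemma EPaffine_invariant g : EPaffine g ->
  invariant_form (@EPdom R n) g (EPeta L) /\
  forall k, invariant_form (@EPdom R n) g (EPtheta L beta k).
Proof.
case=> A [B [t [c [[A_gt0 B_compat] /funext ->]]]].
have Im_g p : complex.Im (diag_affine A B t c p ord0 ord0) = A * complex.Im (p ord0 ord0).
  by rewrite mxE /diag_coef unlift_none cImD cImM /= mul0r !addr0.
split=> [p y_gt0 v|k p y_gt0 v].
  rewrite /EPeta /Impow Dmap_diag_affine mxE /diag_coef unlift_none Im_g.
  rewrite (rpowcN1 (mulr_gt0 A_gt0 y_gt0)) (rpowcN1 y_gt0) invfM rmorphM /=.
  by field; rewrite !realC_neq0 ?lt0r_neq0.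
rewrite /EPtheta /Impow Dmap_diag_affine mxE /diag_coef liftK Im_g rpowcM //.
by rewrite -[RHS]mul1r -(B_compat k); ring.
Qed.

Lemma EPcompatible_neq0 A B k : EPcompatible A B -> B k != 0.
Proof.
case=> _ B_compat; apply/eqP => Bk0; have := B_compat k.
by rewrite Bk0 mul0r => /eqP; rewrite eq_sym oner_eq0.
Qed.

Lemma EPaffine_comp g h : EPaffine g -> EPaffine h -> EPaffine (g \o h).
Proof.
case=> A1 [B1 [t1 [c1 [[A1_gt0 B1_compat] g_aff]]]].
case=> A2 [B2 [t2 [c2 [[A2_gt0 B2_compat] h_aff]]]].
exists (A1 * A2), (fun k => B1 k * B2 k), (A1 * t2 + t1), (fun k => B1 k * c2 k + c1 k).
split=> [|p].
  split=> [|k]; first exact: mulr_gt0.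
  rewrite rpowcM //; have := B1_compat k; have := B2_compat k.
  move: (rpowc A1 _) (rpowc A2 _) => Q1 Q2 BQ2 BQ1.
  by rewrite -[RHS]mulr1 -{1}BQ1 -BQ2; ring.
rewrite /= g_aff h_aff; apply/rowP => j; rewrite !mxE /diag_coef.
by case: (unliftP ord0 j) => [k ->|->] /=; rewrite ?rmorphD ?rmorphM /=; ring.
Qed.

Lemma EPaffine_inv g h : EPaffine g -> cancel g h -> cancel h g -> EPaffine h.
Proof.
case=> A [B [t [c [B_compat g_aff]]]] gK hK; have [A_gt0 AB1] := B_compat.
have A_neq0 := lt0r_neq0 A_gt0; have Bk_neq0 k := EPcompatible_neq0 k B_compat.
exists A^-1, (fun k => (B k)^-1), (- (t / A)), (fun k => - (c k / B k)).
have g_inv p : g (diag_affine A^-1 (fun k => (B k)^-1) (- (t / A)) (fun k => - (c k / B k)) p) = p.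
  rewrite g_aff; apply/rowP => j; rewrite !mxE /diag_coef.
  case: (unliftP ord0 j) => [k ->|->] /=; first by field.
  rewrite -[p 0 ord0]/(p ord0 ord0) rmorphN rmorphM !rmorphV ?unitfE //=.
  by field; rewrite realC_neq0.
split=> [|p]; last by rewrite -{1}(g_inv p) gK.
split=> [|k]; first by rewrite invr_gt0.
have rpowcV : rpowc A^-1 (EPexponent L beta k) = (rpowc A (EPexponent L beta k))^-1.
  apply: (mulIf (rpowc_neq0 A (EPexponent L beta k))).
  by rewrite -rpowcM ?invr_gt0 // mulVf // rpowc1 mulVf ?rpowc_neq0.
by rewrite rpowcV -invfM AB1 invr1.
Qed.

End EPAffine.

Section EPGroup.
Variable R : realType.
Local Notation C := R[i].
Variables n m : nat.
Variable alpha : R.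
Hypothesis alpha_gt0 : 0 < alpha.
Hypothesis ln_alpha_neq0 : ln alpha != 0.
Variable beta : 'I_n -> C.
Hypothesis Im_beta_gt0 : forall k, 0 < complex.Im (beta k).
Variable Rm : 'M[C]_n.
Hypothesis Rm_diag : forall l k, Rm l k = if l == k then beta k else 0.
Variable a : 'cV[R]_m.
Variable b : 'I_n -> 'cV[C]_m.

Lemma EPaffine_gen i : EPaffine (ln alpha) beta (EPgens alpha Rm a b i).
Proof.
rewrite /EPgens; case: (unliftP ord0 i) => [i' _|_] /=.
  exists 1, (fun _ => 1), (a i' ord0), (fun k => b k i' ord0); split.
    by split=> // k; rewrite rpowc1 mul1r.
  move=> p; apply/rowP => j; rewrite /uvec !mxE /diag_coef.
  by case: (unliftP ord0 j) => [k ->|->] /=; rewrite mul1r.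
exists alpha, beta, 0, (fun _ => 0); split.
  have beta_neq0 k : beta k != 0.
    by rewrite eq_complex negb_and /= (lt0r_neq0 (Im_beta_gt0 k)) orbT.
  split=> // k; rewrite /rpowc /EPexponent divfK ?realC_neq0 //.
  by rewrite cexpN cexp_Log // mulfV.
move=> p; apply/rowP => j; rewrite /EPg0 !mxE /diag_coef.
case: (unliftP ord0 j) => [k ->|->] /=; last by rewrite addr0.
rewrite addr0 (bigD1 k) //= big1 ?addr0 ?Rm_diag ?eqxx // => l /negbTE lk.
by rewrite Rm_diag lk mul0r.
Qed.

Lemma EPaffine_gen_group g : gen_group (EPgens alpha Rm a b) g -> EPaffine (ln alpha) beta g.
Proof.
elim=> [i|g1 h1 _ IH1 _ IH2|g1 h1 _ IH1 gK hK].
- exact: EPaffine_gen.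
- exact: EPaffine_comp.
- exact: EPaffine_inv IH1 gK hK.
Qed.

End EPGroup.

Unset Implicit Arguments.
Theorem corollary5p2 (R : realType) (n : nat) (n_ge2 : (2 <= n)%N)
  (M : 'M[int]_((2 * n).+1)) (detM : \det M = 1)
  (alpha : R) (alpha_gt0 : 0 < alpha) (alpha_ne1 : alpha != 1)
  (beta : 'I_n -> R[i]) (Im_beta : forall j, 0 < complex.Im (beta j))
  (charM : char_poly (map_mx (@intC R) M) =
      ('X - (alpha%:C)%:P) * (\prod_j ('X - (beta j)%:P))
      * (\prod_j ('X - ((beta j)^*)%:P)))
  (diagM : diagonalizable (map_mx (@intC R) M))
  (a : 'cV[R]_((2 * n).+1)) (a_nz : a != 0)
  (a_eig : map_mx (fun z : int => z%:~R : R) M *m a = alpha *: a)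
  (b : 'I_n -> 'cV[R[i]]_((2 * n).+1))
  (b_basis : basis_of_W (map_mx (@intC R) M) beta b)
  (b_eig : forall j, map_mx (@intC R) M *m b j = beta j *: b j)
  (Rm : 'M[R[i]]_n)
  (Rm_def : forall j, map_mx (@intC R) M *m b j = \sum_i Rm i j *: b i) :
  exists (eta : form1 R n) (theta : 'I_n -> form1 R n),
    smooth_10_form (@EPdom R n) eta /\
        (forall k, smooth_10_form (@EPdom R n) (theta k)) /\
        (forall g, gen_group (EPgens alpha Rm a b) g ->
           invariant_form (@EPdom R n) g eta /\
           forall k, invariant_form (@EPdom R n) g (theta k)) /\
        (forall p, EPdom p -> basis10_at (famf eta theta) p) /\
        (forall p X Y, EPdom p ->
           dform eta p X Y = (ln alpha)%:C * wedge1 eta (conjform eta) p X Y) /\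
        (forall k p X Y, EPdom p ->
           dform (theta k) p X Y
             = - Log (beta k) * wedge1 (addform eta (conjform eta)) (theta k) p X Y).
Proof.
have ln_alpha_neq0 : ln alpha != 0 by rewrite ln_eq0.
have Rm_diag : forall l k, Rm l k = if l == k then beta k else 0.
  by apply: eigen_coord_diag b_basis.2.1 _ => j; rewrite -Rm_def b_eig.
exists (EPeta (ln alpha)), (EPtheta (ln alpha) beta).
split; first exact: smooth_10_form_EPeta.
split; first exact: smooth_10_form_EPtheta.
split=> [g /(EPaffine_gen_group alpha_gt0 ln_alpha_neq0 Im_beta Rm_diag)|].
  exact: EPaffine_invariant.
split; first by move=> p _; exact: basis10_at_EP.
split; first by move=> p X Y; exact: dform_EPeta.
by move=> k p X Y; exact: dform_EPtheta.
Qed.
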